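(* If $\mu>-\frac{3}{2}$ and $|\mu|>|\nu|$, then $x\mapsto \mathbf{L}_\mu(x)/\tilde{t}_{\mu,\nu}(x)$ is strictly increasing on $(0,\infty)$. If $\mu>-\frac{3}{2}$ and $|\mu|<|\nu|<\mu+3$, then $x\mapsto \mathbf{L}_\mu(x)/\tilde{t}_{\mu,\nu}(x)$ is strictly decreasing on $(0,\infty)$.
   Context: For real $\mu,\nu$ the (normalized) modified Lommel function of the first kind is $$\tilde{t}_{\mu,\nu}(x)=\sum_{k=0}^\infty\frac{(\frac{1}{2}x)^{\mu+2k+1}}{\Gamma\big(k+\frac{\mu-\nu+3}{2}\big)\Gamma\big(k+\frac{\mu+\nu+3}{2}\big)},\quad x>0,$$ and the modified Struve function of the first kind is $$\mathbf{L}_\mu(x)=\sum_{k=0}^\infty\frac{(\frac{1}{2}x)^{2k+\mu+1}}{\Gamma(k+\frac{3}{2})\Gamma(k+\mu+\frac{3}{2})}.$$ *)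

From Stdlib Require Import Reals.
From Coquelicot Require Import Coquelicot.
Open Scope R_scope.

(* Euler's Gamma function for s > 0: Gamma s = int_0^oo t^(s-1) e^(-t) dt
   (improper Riemann integral; only used at positive arguments). *)
Definition Gamma (s : R) : R :=
  RInt_gen (fun t => Rpower t (s - 1) * exp (- t))
           (at_right 0) (Rbar_locally p_infty).

Definition lommel_t (mu nu x : R) : R :=
  Series (fun k : nat =>
    Rpower (x / 2) (mu + 2 * INR k + 1)
    / (Gamma (INR k + (mu - nu + 3) / 2) * Gamma (INR k + (mu + nu + 3) / 2))).

Definition struve_L (mu x : R) : R :=
  Series (fun k : nat =>
    Rpower (x / 2) (2 * INR k + mu + 1)
    / (Gamma (INR k + 3 / 2) * Gamma (INR k + mu + 3 / 2))).

(* Writing z = (x/2)^2, both functions are (x/2)^(mu+1) times a power series in z,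
   with coefficients 1/(Gamma(k+3/2) Gamma(k+mu+3/2)) for L_mu and
   1/(Gamma(k+alpha) Gamma(k+beta)) for t_(mu,nu), where alpha = (mu-nu+3)/2 and
   beta = (mu+nu+3)/2 are positive under either hypothesis.  By Gamma(s+1) = s Gamma(s),
   the ratio of the k-th coefficients gets multiplied at each step by
   (k+alpha)(k+beta) / ((k+3/2)(k+mu+3/2)) = 1 + (mu^2-nu^2) / (4 (k+3/2)(k+mu+3/2)),
   so it is strictly increasing when |mu| > |nu| and strictly decreasing when
   |mu| < |nu|.  A quotient of two power series whose coefficient ratio is strictly
   monotone is strictly monotone on (0, oo) in the same direction (Biernacki-Krzyz). *)

From Stdlib Require Import Reals Lra Lia Classical.
From Coquelicot Require Import Coquelicot.
Open Scope R_scope.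

Lemma Rmin_pos_le a b x : 0 < a -> 0 < b -> Rmin a b <= x -> 0 < x.
Proof. intros Ha Hb Hx. eapply Rlt_le_trans; [|exact Hx]. now apply Rmin_glb_lt. Qed.

Section PositiveHalfLine.

Variable f : R -> R.
Hypothesis f_cont : forall t, 0 < t -> continuous f t.
Hypothesis f_ge0 : forall t, 0 < t -> 0 <= f t.

Lemma ex_RInt_pos a b : 0 < a -> 0 < b -> ex_RInt f a b.
Proof.
  intros Ha Hb. apply (ex_RInt_continuous (V := R_CompleteNormedModule)).
  intros z [Hz _]. exact (f_cont z (Rmin_pos_le a b z Ha Hb Hz)).
Qed.

Lemma RInt_le_widen a' a b b' :
  0 < a' -> a' <= a -> a <= b -> b <= b' -> RInt f a b <= RInt f a' b'.
Proof.
  intros Ha' Ha'a Hab Hbb'.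
  rewrite <- (RInt_Chasles (V := R_CompleteNormedModule) f a' a b'),
    <- (RInt_Chasles (V := R_CompleteNormedModule) f a b b') by (apply ex_RInt_pos; lra).
  assert (0 <= RInt f a' a)
    by (apply RInt_ge_0; [lra | apply ex_RInt_pos; lra | intros; apply f_ge0; lra]).
  assert (0 <= RInt f b b')
    by (apply RInt_ge_0; [lra | apply ex_RInt_pos; lra | intros; apply f_ge0; lra]).
  change plus with Rplus. lra.
Qed.

(* The limit is the supremum of the integrals over the intervals [a, b] containing 1,
   which increase with the interval since [f >= 0]. *)
Lemma is_RInt_gen_nonneg_bounded (M : R) :
  (forall a b, 0 < a <= 1 -> 1 <= b -> RInt f a b <= M) ->
  exists l, is_RInt_gen f (at_right 0) (Rbar_locally p_infty) l /\
    forall a b, 0 < a <= 1 -> 1 <= b -> RInt f a b <= l.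
Proof.
  intros HM.
  set (E := fun v => exists a b, 0 < a <= 1 /\ 1 <= b /\ v = RInt f a b).
  destruct (completeness E) as [l [l_ub l_least]].
  { exists M. intros v (a & b & Ha & Hb & ->). auto. }
  { exists (RInt f 1 1), 1, 1. repeat split; lra. }
  assert (E_le : forall a b, 0 < a <= 1 -> 1 <= b -> RInt f a b <= l)
    by (intros a b Ha Hb; apply l_ub; now exists a, b).
  exists l. split; [|exact E_le].
  intros P [eps HP].
  assert (exists a0 b0, 0 < a0 <= 1 /\ 1 <= b0 /\ l - eps < RInt f a0 b0)
    as (a0 & b0 & Ha0 & Hb0 & Hnear).
  { apply NNPP. intros Hno.
    assert (l <= l - eps).
    { apply l_least. intros v (a & b & Ha & Hb & ->).
      apply Rnot_lt_le. intros Hlt. apply Hno. now exists a, b. }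
    destruct eps; simpl in *; lra. }
  apply Filter_prod with (fun a => 0 < a < a0) (fun b => b0 < b).
  - exists (mkposreal a0 ltac:(lra)). intros a Ha Ha_pos. split; [exact Ha_pos|].
    apply Rabs_lt_between' in Ha. simpl in Ha. lra.
  - now exists b0.
  - intros a b Ha Hb. exists (RInt f a b). split.
    { apply (RInt_correct (V := R_CompleteNormedModule)), ex_RInt_pos; lra. }
    apply HP. apply Rabs_lt_between'. simpl.
    assert (RInt f a0 b0 <= RInt f a b) by (apply RInt_le_widen; lra).
    assert (RInt f a b <= l) by (apply E_le; lra).
    lra.
Qed.

End PositiveHalfLine.

Definition gamma_integrand (s t : R) : R := Rpower t (s - 1) * exp (- t).

Lemma gamma_integrand_pos s t : 0 < gamma_integrand s t.
Proof. apply Rmult_lt_0_compat; apply exp_pos. Qed.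

Lemma gamma_integrand_cont s t : 0 < t -> continuous (gamma_integrand s) t.
Proof.
  intros Ht. apply (ex_derive_continuous (V := R_NormedModule)).
  unfold gamma_integrand, Rpower. auto_derive. lra.
Qed.

Lemma exp_le_compat x y : x <= y -> exp x <= exp y.
Proof. intros [H | ->]; [left; now apply exp_increasing | lra]. Qed.

(* K = m^|s-1| with m = 2|s-1| + 2, from ln t <= ln m + t/m - 1 (that is,
   e^u >= 1 + u at u = ln(t/m)). *)
Lemma gamma_integrand_tail_bound s :
  exists K, 0 < K /\ forall t, 1 <= t -> gamma_integrand s t <= K * exp (- t / 2).
Proof.
  set (c := Rabs (s - 1)). set (m := 2 * c + 2).
  assert (Hc : 0 <= c) by apply Rabs_pos.
  assert (Hm : 0 < m) by (unfold m; lra).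
  exists (exp (c * ln m)). split; [apply exp_pos|].
  intros t Ht. unfold gamma_integrand, Rpower. rewrite <- !exp_plus. apply exp_le_compat.
  assert (Hlnt : 0 <= ln t) by (rewrite <- ln_1; apply ln_le; lra).
  assert ((s - 1) * ln t <= c * ln t) by (apply Rmult_le_compat_r; [exact Hlnt | apply Rle_abs]).
  assert (Hln : ln t <= ln m + t / m - 1).
  { pose proof (exp_ineq1_le (ln (t / m))) as Hexp.
    rewrite exp_ln, ln_div in Hexp by (try apply Rdiv_lt_0_compat; lra). lra. }
  assert (c * (t / m) <= t / 2).
  { apply (Rmult_le_reg_r m); [exact Hm|]. field_simplify; [|lra]. unfold m. nra. }
  assert (c * ln t <= c * (ln m + t / m - 1)) by (apply Rmult_le_compat_l; lra).
  nra.
Qed.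

Lemma RInt_gamma_integrand_head_le s a :
  0 < s -> 0 < a <= 1 -> RInt (gamma_integrand s) a 1 <= / s.
Proof.
  intros Hs Ha.
  assert (Hpow : is_RInt (fun t => Rpower t (s - 1)) a 1
                   (exp (s * ln 1) / s - exp (s * ln a) / s)).
  { apply (is_RInt_derive (V := R_CompleteNormedModule) (fun t => exp (s * ln t) / s)).
    - intros x [Hx _]. assert (0 < x) by (apply (Rmin_pos_le a 1); lra).
      auto_derive; [lra|]. unfold Rpower.
      replace ((s - 1) * ln x) with (s * ln x + - ln x) by ring.
      rewrite exp_plus, exp_Ropp, exp_ln by lra. field. lra.
    - intros x [Hx _]. assert (0 < x) by (apply (Rmin_pos_le a 1); lra).
      apply (ex_derive_continuous (V := R_NormedModule)). unfold Rpower. auto_derive. lra. }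
  eapply Rle_trans.
  - apply (RInt_le (gamma_integrand s) (fun t => Rpower t (s - 1)));
      [lra | | eexists; exact Hpow |].
    + apply ex_RInt_pos; [intros; now apply gamma_integrand_cont | lra | lra].
    + intros t Ht. unfold gamma_integrand. rewrite <- (Rmult_1_r (Rpower t (s - 1))) at 2.
      apply Rmult_le_compat_l; [left; apply exp_pos|].
      rewrite <- exp_0. apply exp_le_compat. lra.
  - rewrite (is_RInt_unique _ _ _ _ Hpow), ln_1, Rmult_0_r, exp_0.
    assert (0 < exp (s * ln a) / s) by (apply Rdiv_lt_0_compat; [apply exp_pos | lra]).
    unfold Rdiv in *. lra.
Qed.

Lemma RInt_exp_half_le K b :
  0 <= K -> 1 <= b -> RInt (fun t => K * exp (- t / 2)) 1 b <= 2 * K.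
Proof.
  intros HK Hb.
  assert (Hexp : is_RInt (fun t => K * exp (- t / 2)) 1 b
                   (- 2 * K * exp (- b / 2) - - 2 * K * exp (- 1 / 2))).
  { apply (is_RInt_derive (V := R_CompleteNormedModule) (fun t => - 2 * K * exp (- t / 2))).
    - intros u _. auto_derive; [exact I|]. unfold Rdiv. field.
    - intros u _. apply (ex_derive_continuous (V := R_NormedModule)). auto_derive. exact I. }
  rewrite (is_RInt_unique _ _ _ _ Hexp).
  assert (0 < exp (- b / 2)) by apply exp_pos.
  assert (exp (- 1 / 2) <= 1) by (rewrite <- exp_0; apply exp_le_compat; lra).
  nra.
Qed.

Lemma RInt_gamma_integrand_bounded s : 0 < s ->
  exists M, forall a b, 0 < a <= 1 -> 1 <= b -> RInt (gamma_integrand s) a b <= M.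
Proof.
  intros Hs. destruct (gamma_integrand_tail_bound s) as [K [HK Htail]].
  exists (/ s + 2 * K). intros a b Ha Hb.
  rewrite <- (RInt_Chasles (V := R_CompleteNormedModule) _ a 1 b)
    by (apply ex_RInt_pos; [intros; now apply gamma_integrand_cont | lra | lra]).
  change plus with Rplus.
  assert (RInt (gamma_integrand s) 1 b <= 2 * K).
  { eapply Rle_trans; [|apply (RInt_exp_half_le K b); lra].
    apply RInt_le; [lra | | |].
    - apply ex_RInt_pos; [intros; now apply gamma_integrand_cont | lra | lra].
    - apply (ex_RInt_continuous (V := R_CompleteNormedModule)). intros t _.
      apply (ex_derive_continuous (V := R_NormedModule)). auto_derive. exact I.
    - intros t Ht. apply Htail. lra. }
  pose proof (RInt_gamma_integrand_head_le s a Hs Ha). lra.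
Qed.

Lemma Gamma_improper s : 0 < s ->
  is_RInt_gen (gamma_integrand s) (at_right 0) (Rbar_locally p_infty) (Gamma s) /\
  forall a b, 0 < a <= 1 -> 1 <= b -> RInt (gamma_integrand s) a b <= Gamma s.
Proof.
  intros Hs. destruct (RInt_gamma_integrand_bounded s Hs) as [M HM].
  destruct (is_RInt_gen_nonneg_bounded (gamma_integrand s) (gamma_integrand_cont s)
              (fun t _ => Rlt_le _ _ (gamma_integrand_pos s t)) M HM) as [l [Hl Hle]].
  now rewrite (is_RInt_gen_unique (V := R_CompleteNormedModule) _ _ Hl : Gamma s = l).
Qed.

Lemma Gamma_pos s : 0 < s -> 0 < Gamma s.
Proof.
  intros Hs. eapply Rlt_le_trans; [|apply (proj2 (Gamma_improper s Hs) 1 2); lra].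
  apply RInt_gt_0; [lra | intros; apply gamma_integrand_pos |].
  intros t Ht. apply gamma_integrand_cont. lra.
Qed.

Lemma filterlim_Rpower_exp_right_0 s : 0 < s ->
  filterlim (fun t => Rpower t s * exp (- t)) (at_right 0) (locally 0).
Proof.
  intros Hs. apply filterlim_locally. intros eps.
  exists (mkposreal (Rpower eps (/ s)) (exp_pos _)). intros t Ht Htpos.
  apply Rabs_lt_between' in Ht. simpl in Ht.
  assert (Rpower t s < eps).
  { replace (pos eps) with (Rpower (Rpower eps (/ s)) s)
      by (rewrite Rpower_mult, Rinv_l, Rpower_1 by (try apply cond_pos; lra); reflexivity).
    apply Rlt_Rpower_l; lra. }
  assert (exp (- t) <= 1) by (rewrite <- exp_0; apply exp_le_compat; lra).
  assert (0 < Rpower t s) by apply exp_pos.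
  assert (0 < exp (- t)) by apply exp_pos.
  apply Rabs_lt_between'.
  nra.
Qed.

Lemma filterlim_Rpower_exp_p_infty s :
  filterlim (fun t => Rpower t s * exp (- t)) (Rbar_locally p_infty) (locally 0).
Proof.
  destruct (gamma_integrand_tail_bound (s + 1)) as [K [HK Htail]].
  apply filterlim_locally. intros eps.
  exists (Rmax 1 (- 2 * ln (eps / K))). intros t Ht.
  pose proof (Rmax_l 1 (- 2 * ln (eps / K))). pose proof (Rmax_r 1 (- 2 * ln (eps / K))).
  assert (Ht1 : 1 <= t) by lra.
  assert (Hbound : Rpower t s * exp (- t) <= K * exp (- t / 2)).
  { replace s with (s + 1 - 1) at 1 by ring. exact (Htail t Ht1). }
  assert (Hexp : exp (- t / 2) < eps / K).
  { rewrite <- (exp_ln (eps / K)) by (apply Rdiv_lt_0_compat; [apply cond_pos | lra]).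
    apply exp_increasing. lra. }
  assert (K * exp (- t / 2) < eps).
  { apply (Rmult_lt_compat_l K) in Hexp; [|lra]. field_simplify in Hexp; lra. }
  assert (0 < Rpower t s * exp (- t)) by (apply Rmult_lt_0_compat; apply exp_pos).
  apply Rabs_lt_between'. lra.
Qed.

Lemma is_derive_Rpower_exp s t : 0 < t ->
  is_derive (fun u => - (Rpower u s * exp (- u))) t
    (gamma_integrand (s + 1) t - s * gamma_integrand s t).
Proof.
  intros Ht. unfold gamma_integrand, Rpower. auto_derive; [lra|].
  replace (s + 1 - 1) with s by ring.
  replace ((s - 1) * ln t) with (s * ln t + - ln t) by ring.
  rewrite exp_plus, (exp_Ropp (ln t)), exp_ln by lra. field. lra.
Qed.

Lemma filter_prod_interval_pos (P : R -> Prop) :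
  (forall x, 0 < x -> P x) ->
  filter_prod (at_right 0) (Rbar_locally p_infty)
    (fun ab => forall x, Rmin (fst ab) (snd ab) <= x <= Rmax (fst ab) (snd ab) -> P x).
Proof.
  intros HP. apply Filter_prod with (fun a => 0 < a) (fun b => 0 < b).
  - exists (mkposreal 1 Rlt_0_1). now intros.
  - now exists 0.
  - intros a b Ha Hb x [Hx _]. exact (HP x (Rmin_pos_le a b x Ha Hb Hx)).
Qed.

(* Integration by parts over (0, oo): the boundary term t^s e^(-t) vanishes at both ends. *)
Lemma Gamma_succ s : 0 < s -> Gamma (s + 1) = s * Gamma s.
Proof.
  intros Hs.
  set (F := fun u => - (Rpower u s * exp (- u))).
  assert (HDF : forall t, 0 < t ->
                 Derive F t = gamma_integrand (s + 1) t - s * gamma_integrand s t)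
    by (intros t Ht; now apply is_derive_unique, is_derive_Rpower_exp).
  assert (Hparts : is_RInt_gen (Derive F) (at_right 0) (Rbar_locally p_infty) (- 0 - - 0)).
  { apply is_RInt_gen_Derive.
    - apply filter_prod_interval_pos. intros t Ht. eexists. now apply is_derive_Rpower_exp.
    - apply filter_prod_interval_pos. intros t Ht.
      apply (continuous_ext_loc _ (fun u => gamma_integrand (s + 1) u - s * gamma_integrand s u)).
      + exists (mkposreal t Ht). intros u Hu. symmetry. apply HDF.
        apply Rabs_lt_between' in Hu. simpl in Hu. lra.
      + apply (continuous_minus (V := R_NormedModule));
          [|apply (continuous_scal_r (V := R_NormedModule))]; now apply gamma_integrand_cont.
    - exact (filterlim_comp _ _ _ _ _ _ _ _ (filterlim_Rpower_exp_right_0 s Hs) (filterlim_opp 0)).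
    - exact (filterlim_comp _ _ _ _ _ _ _ _ (filterlim_Rpower_exp_p_infty s) (filterlim_opp 0)). }
  assert (Hsum := is_RInt_gen_plus _ _ _ _ Hparts
                    (is_RInt_gen_scal _ s _ (proj1 (Gamma_improper s Hs)))).
  apply (is_RInt_gen_ext _ (gamma_integrand (s + 1))) in Hsum.
  - rewrite (is_RInt_gen_unique (V := R_CompleteNormedModule) _ _ Hsum : Gamma (s + 1) = _).
    change plus with Rplus. change scal with Rmult. simpl. ring.
  - eapply filter_imp; [|apply filter_prod_interval_pos with (P := fun t => 0 < t); now intros].
    intros [a b] Hab x Hx. simpl in *. rewrite HDF by (apply Hab; split; lra).
    change plus with Rplus. change scal with Rmult. simpl. ring.
Qed.

Lemma is_lim_seq_PSeries (c : nat -> R) x : ex_pseries c x ->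
  is_lim_seq (fun n => sum_f_R0 (fun k => c k * x ^ k) n) (PSeries c x).
Proof.
  intros Hc. apply ex_pseries_R, Series_correct in Hc.
  eapply is_lim_seq_ext; [intros n; apply sum_n_Reals | exact Hc].
Qed.

Lemma PSeries_pos (c : nat -> R) x :
  (forall k, 0 < c k) -> 0 < x -> ex_pseries c x -> 0 < PSeries c x.
Proof.
  intros Hc Hx Hex.
  assert (Hincr : forall n,
    sum_f_R0 (fun k => c k * x ^ k) n <= sum_f_R0 (fun k => c k * x ^ k) (S n)).
  { intros n. rewrite tech5. pose proof (Hc (S n)). pose proof (pow_lt x (S n) Hx). nra. }
  pose proof (is_lim_seq_incr_compare _ _ (is_lim_seq_PSeries c x Hex) Hincr 0%nat) as H0.
  simpl in H0. pose proof (Hc 0%nat). lra.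
Qed.

Lemma pow_cross_le z w i j : 0 < z <= w -> (i <= j)%nat -> z ^ j * w ^ i <= w ^ j * z ^ i.
Proof.
  intros Hzw Hij. replace j with (i + (j - i))%nat by lia. rewrite !pow_add.
  assert (z ^ (j - i) <= w ^ (j - i)) by (apply pow_incr; lra).
  assert (0 < z ^ i * w ^ i) by (apply Rmult_lt_0_compat; apply pow_lt; lra).
  nra.
Qed.

Section PowerSeriesRatio.

Variables a b : nat -> R.

Let psum (c : nat -> R) (x : R) (n : nat) := sum_f_R0 (fun k => c k * x ^ k) n.
Let cross (z w : R) (n : nat) := psum a w n * psum b z n - psum a z n * psum b w n.

Lemma sum_cross_terms z w a' b' z' w' n :
  sum_f_R0 (fun i => (a' * b i - a i * b') * (w' * z ^ i - z' * w ^ i)) n =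
  a' * w' * psum b z n + b' * z' * psum a w n - a' * z' * psum b w n - b' * w' * psum a z n.
Proof. unfold psum. induction n as [|n IH]; simpl; [|rewrite IH]; ring. Qed.

Lemma cross_succ z w n : cross z w (S n) - cross z w n =
  sum_f_R0 (fun i => (a (S n) * b i - a i * b (S n)) *
                     (w ^ S n * z ^ i - z ^ S n * w ^ i)) n.
Proof. rewrite sum_cross_terms. unfold cross, psum. rewrite !tech5. ring. Qed.

Hypothesis b_pos : forall k, 0 < b k.
Hypothesis ratio_step : forall k, a k * b (S k) < a (S k) * b k.

Lemma ratio_cross_le i j : (i <= j)%nat -> a i * b j <= a j * b i.
Proof.
  induction 1 as [|m _ IH]; [lra|].
  apply (Rmult_le_reg_l (b m)); [apply b_pos|].
  pose proof (ratio_step m). pose proof (b_pos i). pose proof (b_pos (S m)). nra.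
Qed.

Lemma cross_nondecr z w n : 0 < z <= w -> cross z w n <= cross z w (S n).
Proof.
  intros Hzw. enough (0 <= cross z w (S n) - cross z w n) by lra.
  rewrite cross_succ, <- (sum_eq_R0 (fun _ => 0) n) by reflexivity.
  apply sum_Rle. intros i Hi. apply Rmult_le_pos.
  - pose proof (ratio_cross_le i (S n) ltac:(lia)). lra.
  - pose proof (pow_cross_le z w i (S n) Hzw ltac:(lia)). lra.
Qed.

Lemma PSeries_cross_lt z w : 0 < z < w ->
  ex_pseries a z -> ex_pseries a w -> ex_pseries b z -> ex_pseries b w ->
  PSeries a z * PSeries b w < PSeries a w * PSeries b z.
Proof.
  intros Hzw Haz Haw Hbz Hbw.
  assert (Hlim : is_lim_seq (cross z w)
                   (PSeries a w * PSeries b z - PSeries a z * PSeries b w))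
    by (apply is_lim_seq_minus'; apply is_lim_seq_mult'; now apply is_lim_seq_PSeries).
  assert (H1 : 0 < cross z w 1).
  { unfold cross, psum. simpl. pose proof (ratio_step 0). nra. }
  pose proof (is_lim_seq_incr_compare _ _ Hlim (fun n => cross_nondecr z w n ltac:(lra)) 1). lra.
Qed.

End PowerSeriesRatio.

Definition inv_gamma2 (p q : R) (k : nat) : R :=
  / (Gamma (INR k + p) * Gamma (INR k + q)).

Section InvGamma2.

Variables p q : R.
Hypothesis p_pos : 0 < p.
Hypothesis q_pos : 0 < q.

Lemma inv_gamma2_pos k : 0 < inv_gamma2 p q k.
Proof.
  pose proof (pos_INR k). apply Rinv_0_lt_compat.
  apply Rmult_lt_0_compat; apply Gamma_pos; lra.
Qed.

Lemma inv_gamma2_S k :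
  inv_gamma2 p q (S k) = inv_gamma2 p q k / ((INR k + p) * (INR k + q)).
Proof.
  pose proof (pos_INR k). unfold inv_gamma2. rewrite S_INR.
  replace (INR k + 1 + p) with (INR k + p + 1) by ring.
  replace (INR k + 1 + q) with (INR k + q + 1) by ring.
  rewrite !Gamma_succ by lra.
  pose proof (Gamma_pos (INR k + p) ltac:(lra)).
  pose proof (Gamma_pos (INR k + q) ltac:(lra)).
  field. repeat split; lra.
Qed.

Lemma ex_pseries_inv_gamma2 x : ex_pseries (inv_gamma2 p q) x.
Proof.
  apply CV_radius_inside. rewrite CV_radius_infinite_DAlembert; [exact I | |].
  - intros n. apply Rgt_not_eq, inv_gamma2_pos.
  - apply (is_lim_seq_ext (fun n => / ((INR n + p) * (INR n + q)))).
    + intros n. pose proof (pos_INR n). pose proof (inv_gamma2_pos n).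
      rewrite inv_gamma2_S, Rabs_pos_eq.
      * field. repeat split; lra.
      * apply Rlt_le, Rdiv_lt_0_compat; [apply Rdiv_lt_0_compat|]; nra.
    + replace (Finite 0) with (Rbar_inv p_infty) by reflexivity.
      apply is_lim_seq_inv; [|discriminate].
      assert (Hlin : forall c, is_lim_seq (fun n => INR n + c) p_infty).
      { intros c.
        eapply is_lim_seq_plus; [apply is_lim_seq_INR | apply is_lim_seq_const | constructor]. }
      eapply is_lim_seq_mult; [apply Hlin | apply Hlin | constructor].
Qed.

Lemma PSeries_inv_gamma2_pos x : 0 < x -> 0 < PSeries (inv_gamma2 p q) x.
Proof.
  intros Hx. apply PSeries_pos; [apply inv_gamma2_pos | exact Hx | apply ex_pseries_inv_gamma2].
Qed.

End InvGamma2.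

Lemma inv_gamma2_ratio_step p1 q1 p2 q2 :
  0 < p1 -> 0 < q1 -> 0 < p2 -> 0 < q2 ->
  (forall k, (INR k + p1) * (INR k + q1) < (INR k + p2) * (INR k + q2)) ->
  forall k, inv_gamma2 p1 q1 k * inv_gamma2 p2 q2 (S k) <
            inv_gamma2 p1 q1 (S k) * inv_gamma2 p2 q2 k.
Proof.
  intros Hp1 Hq1 Hp2 Hq2 Hlt k. rewrite !inv_gamma2_S by assumption.
  pose proof (inv_gamma2_pos p1 q1 Hp1 Hq1 k). pose proof (inv_gamma2_pos p2 q2 Hp2 Hq2 k).
  pose proof (pos_INR k). specialize (Hlt k).
  assert (Hinv : / ((INR k + p2) * (INR k + q2)) < / ((INR k + p1) * (INR k + q1)))
    by (apply Rinv_lt_contravar; [apply Rmult_lt_0_compat|]; nra).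
  apply (Rmult_lt_compat_l (inv_gamma2 p1 q1 k * inv_gamma2 p2 q2 k)) in Hinv; [|nra].
  unfold Rdiv. lra.
Qed.

Lemma PSeries_inv_gamma2_ratio_incr p1 q1 p2 q2 z w :
  0 < p1 -> 0 < q1 -> 0 < p2 -> 0 < q2 ->
  (forall k, (INR k + p1) * (INR k + q1) < (INR k + p2) * (INR k + q2)) -> 0 < z < w ->
  PSeries (inv_gamma2 p1 q1) z / PSeries (inv_gamma2 p2 q2) z <
  PSeries (inv_gamma2 p1 q1) w / PSeries (inv_gamma2 p2 q2) w.
Proof.
  intros Hp1 Hq1 Hp2 Hq2 Hlt Hzw.
  assert (Hcross := PSeries_cross_lt _ _ (inv_gamma2_pos p2 q2 Hp2 Hq2)
                      (inv_gamma2_ratio_step p1 q1 p2 q2 Hp1 Hq1 Hp2 Hq2 Hlt) z w Hzw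
                      (ex_pseries_inv_gamma2 _ _ Hp1 Hq1 z) (ex_pseries_inv_gamma2 _ _ Hp1 Hq1 w)
                      (ex_pseries_inv_gamma2 _ _ Hp2 Hq2 z) (ex_pseries_inv_gamma2 _ _ Hp2 Hq2 w)).
  pose proof (PSeries_inv_gamma2_pos p2 q2 Hp2 Hq2 z ltac:(lra)).
  pose proof (PSeries_inv_gamma2_pos p2 q2 Hp2 Hq2 w ltac:(lra)).
  apply (Rmult_lt_reg_r (PSeries (inv_gamma2 p2 q2) z * PSeries (inv_gamma2 p2 q2) w));
    [nra | field_simplify; lra].
Qed.

Lemma PSeries_inv_gamma2_ratio_decr p1 q1 p2 q2 z w :
  0 < p1 -> 0 < q1 -> 0 < p2 -> 0 < q2 ->
  (forall k, (INR k + p2) * (INR k + q2) < (INR k + p1) * (INR k + q1)) -> 0 < z < w ->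
  PSeries (inv_gamma2 p1 q1) w / PSeries (inv_gamma2 p2 q2) w <
  PSeries (inv_gamma2 p1 q1) z / PSeries (inv_gamma2 p2 q2) z.
Proof.
  intros Hp1 Hq1 Hp2 Hq2 Hlt Hzw.
  rewrite <- (Rinv_div (PSeries (inv_gamma2 p2 q2) w)),
    <- (Rinv_div (PSeries (inv_gamma2 p2 q2) z)).
  apply Rinv_lt_contravar.
  - apply Rmult_lt_0_compat; apply Rdiv_lt_0_compat; apply PSeries_inv_gamma2_pos; lra.
  - now apply PSeries_inv_gamma2_ratio_incr.
Qed.

Lemma Rpower_half_split x c k : 0 < x ->
  Rpower (x / 2) (c + 2 * INR k) = Rpower (x / 2) c * ((x / 2) ^ 2) ^ k.
Proof.
  intros Hx. rewrite Rpower_plus, <- pow_mult, <- Rpower_pow by lra.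
  rewrite mult_INR. simpl (INR 2). now replace (2 * INR k) with ((1 + 1) * INR k) by ring.
Qed.

Lemma struve_L_PSeries mu x : 0 < x ->
  struve_L mu x =
  Rpower (x / 2) (mu + 1) * PSeries (inv_gamma2 (3 / 2) (mu + 3 / 2)) ((x / 2) ^ 2).
Proof.
  intros Hx. unfold struve_L, PSeries. rewrite <- Series_scal_l. apply Series_ext. intros k.
  replace (2 * INR k + mu + 1) with (mu + 1 + 2 * INR k) by ring.
  rewrite Rpower_half_split by exact Hx. unfold inv_gamma2.
  replace (INR k + mu + 3 / 2) with (INR k + (mu + 3 / 2)) by ring.
  unfold Rdiv at 1. ring.
Qed.

Lemma lommel_t_PSeries mu nu x : 0 < x ->
  lommel_t mu nu x =
  Rpower (x / 2) (mu + 1) *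
  PSeries (inv_gamma2 ((mu - nu + 3) / 2) ((mu + nu + 3) / 2)) ((x / 2) ^ 2).
Proof.
  intros Hx. unfold lommel_t, PSeries. rewrite <- Series_scal_l. apply Series_ext. intros k.
  replace (mu + 2 * INR k + 1) with (mu + 1 + 2 * INR k) by ring.
  rewrite Rpower_half_split by exact Hx. unfold inv_gamma2.
  unfold Rdiv at 1. ring.
Qed.

Lemma struve_lommel_ratio mu nu x : 0 < x ->
  struve_L mu x / lommel_t mu nu x =
  PSeries (inv_gamma2 (3 / 2) (mu + 3 / 2)) ((x / 2) ^ 2) /
  PSeries (inv_gamma2 ((mu - nu + 3) / 2) ((mu + nu + 3) / 2)) ((x / 2) ^ 2).
Proof.
  intros Hx. rewrite struve_L_PSeries, lommel_t_PSeries by exact Hx.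
  apply Rdiv_mult_l_l, Rgt_not_eq, exp_pos.
Qed.

Lemma lommel_params_pos mu nu :
  Rabs nu < mu + 3 -> 0 < (mu - nu + 3) / 2 /\ 0 < (mu + nu + 3) / 2.
Proof. pose proof (Rle_abs nu). pose proof (Rabs_maj2 nu). lra. Qed.

Lemma lommel_struve_factor_gap mu nu k :
  (INR k + (mu - nu + 3) / 2) * (INR k + (mu + nu + 3) / 2) =
  (INR k + 3 / 2) * (INR k + (mu + 3 / 2)) + (mu² - nu²) / 4.
Proof. unfold Rsqr. field. Qed.

Theorem theorem3p2 (mu nu : R) :
  mu > - (3 / 2) ->
  (Rabs mu > Rabs nu ->
     forall x y : R, 0 < x -> x < y ->
       struve_L mu x / lommel_t mu nu x < struve_L mu y / lommel_t mu nu y) /\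
  (Rabs mu < Rabs nu < mu + 3 ->
     forall x y : R, 0 < x -> x < y ->
       struve_L mu y / lommel_t mu nu y < struve_L mu x / lommel_t mu nu x).
Proof.
  intros Hmu.
  assert (Hxy : forall x y, 0 < x -> x < y -> 0 < (x / 2) ^ 2 < (y / 2) ^ 2)
    by (intros x y Hx Hy; simpl; nra).
  split.
  - intros Hgt x y Hx Hy.
    assert (Hnu : Rabs nu < mu + 3) by (unfold Rabs in *; destruct Rcase_abs; lra).
    destruct (lommel_params_pos mu nu Hnu) as [Hp Hq].
    rewrite !struve_lommel_ratio by lra.
    apply PSeries_inv_gamma2_ratio_incr; try lra; [|now apply Hxy].
    intros k. rewrite lommel_struve_factor_gap.
    pose proof (Rsqr_lt_abs_1 nu mu Hgt). lra.
  - intros [Hlt Hnu] x y Hx Hy.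
    destruct (lommel_params_pos mu nu Hnu) as [Hp Hq].
    rewrite !struve_lommel_ratio by lra.
    apply PSeries_inv_gamma2_ratio_decr; try lra; [|now apply Hxy].
    intros k. rewrite lommel_struve_factor_gap.
    pose proof (Rsqr_lt_abs_1 mu nu Hlt). lra.
Qed.
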